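(* Let $p\equiv 1\pmod 4$ be a prime dividing $n$, and let $Q_p\subseteq\mathbb{Z}/p\mathbb{Z}$ be the set of nonzero quadratic residues modulo $p$. Let $a,b,c$ be integers coprime to $p$ with $\left(\frac{a}{p}\right)=-\left(\frac{c}{p}\right)$, and put $J_+=\{aq+b \bmod p: q\in Q_p\}$ and $J_-=\{cq-b\bmod p : q\in Q_p\}$ (viewed as subsets of $\{0,\dots,p-1\}$). Let $A$ be a subgroup of $(\mathbb{Z}/n\mathbb{Z})^\times$ which is the disjoint union $$A=\{jn/p+1\bmod n: j\in J_+\}\sqcup\{jn/p-1 \bmod n: j\in J_-\},$$ and let $X=A\cdot 1=A$. Then for $y\in\mathbb{Z}/n\mathbb{Z}$: if $p\mid y$, then $\sigma_X(y)$ lies in the real interval $[1-p,p-1]$; if $p\nmid y$, then $z=\sigma_X(y)$ satisfies $(\operatorname{Re} z)^2+(\operatorname{Im} z)^2/p=1$.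
   Context: Write $e(\theta)=\exp(2\pi i\theta)$. For a subgroup $A$ of $(\mathbb{Z}/n\mathbb{Z})^\times$ and $r\in\mathbb{Z}/n\mathbb{Z}$, let $X=Ar=\{ar:a\in A\}$ and $\sigma_X(y)=\sum_{x\in X}e\left(\frac{xy}{n}\right)$ for $y\in\mathbb{Z}/n\mathbb{Z}$. $\left(\frac{\cdot}{p}\right)$ denotes the Legendre symbol. The condition $p\mid y$ is well defined for $y\in\mathbb{Z}/n\mathbb{Z}$ since $p\mid n$. *)

From Stdlib Require Import Reals ZArith Znumtheory List Bool.
Import ListNotations.
Open Scope Z_scope.

Definition zrange (m : Z) : list Z := map Z.of_nat (seq 0 (Z.to_nat m)).

Definition is_qr (p q : Z) : bool :=
  existsb (fun x => (x * x) mod p =? q mod p) (zrange p).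

Definition legendre (a p : Z) : Z :=
  if a mod p =? 0 then 0 else if is_qr p a then 1 else -1.

Definition inQ (p q : Z) : bool := (0 <? q) && (q <? p) && is_qr p q.

Definition inJplus (p a b j : Z) : bool :=
  existsb (fun q => inQ p q && ((a * q + b) mod p =? j)) (zrange p).
Definition inJminus (p c b j : Z) : bool :=
  existsb (fun q => inQ p q && ((c * q - b) mod p =? j)) (zrange p).

Definition inAplus (n p a b x : Z) : bool :=
  existsb (fun j => inJplus p a b j && (x =? (j * (n / p) + 1) mod n)) (zrange p).
Definition inAminus (n p c b x : Z) : bool :=
  existsb (fun j => inJminus p c b j && (x =? (j * (n / p) - 1) mod n)) (zrange p).

(* A, as a subset of Z/nZ = {0,...,n-1}. *)
Definition inA (n p a b c x : Z) : bool := inAplus n p a b x || inAminus n p c b x.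

Open Scope R_scope.

(* sigma_X(y) = sum_{x in X} e(xy/n), split into real and imaginary parts,
   where e(t) = exp(2 pi i t) = cos(2 pi t) + i sin(2 pi t). *)
Definition sigma_re (n : Z) (X : Z -> bool) (y : Z) : R :=
  fold_right Rplus 0
    (map (fun x => if X x then cos (2 * PI * IZR (x * y) / IZR n) else 0) (zrange n)).
Definition sigma_im (n : Z) (X : Z -> bool) (y : Z) : R :=
  fold_right Rplus 0
    (map (fun x => if X x then sin (2 * PI * IZR (x * y) / IZR n) else 0) (zrange n)).

(* Write n = p m.  The element (aq+b mod p) m + 1 of the first piece contributes
   e((aq+b)y/p + y/n), so with the phase  theta = 2 pi (b y/p + y/n)  and the
   quadratic periods  eta_k = sum_{q in Q_p} e(kq/p)  the first piece sums to
   e(theta) eta_{ay} and the second one to e(-theta) eta_{cy}.  Since p = 1 mod 4,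
   Q_p = -Q_p and every eta_k is real, hence
     Re sigma = (eta_{ay} + eta_{cy}) cos theta,   Im sigma = (eta_{ay} - eta_{cy}) sin theta.
   If p | y, both periods equal (p-1)/2.  Otherwise (a/p) = -(c/p) makes aQ_p and cQ_p
   complementary in (Z/pZ)^x, so eta_{ay} + eta_{cy} = -1, while eta_{ay} - eta_{cy} is
   a quadratic Gauss sum, whose square is p; then Re^2 + Im^2/p = cos^2 + sin^2 = 1. *)

From Stdlib Require Import Reals ZArith Znumtheory List Bool Lia Lra.
From mathcomp Require all_boot all_order all_algebra finfield Rstruct zify.
From Corelib Require Import ssreflect.

(* The quadratic period eta_k = sum_{q in Q_p} e(kq/p), a real number when p = 1 mod 4. *)
Definition qperiod (p k : Z) : R :=
  (fold_right Rplus 0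
     (map (fun q => if inQ p q then cos (2 * PI * IZR (k * q) / IZR p) else 0) (zrange p)))%R.

Definition phase (n p b y : Z) : R :=
  (2 * PI * IZR (b * y) / IZR p + 2 * PI * IZR y / IZR n)%R.

Module QuadraticPeriods.
Import all_boot all_order all_algebra finfield Rstruct zify.
Delimit Scope Z_scope with Z.
Delimit Scope R_scope with R.
Delimit Scope ring_scope with ring.
Set Implicit Arguments.
Unset Strict Implicit.
Open Scope R_scope.

Definition periodic (f : R -> R) := forall x k, f (x + 2 * IZR k * PI) = f x.

Lemma periodic_of_nat (f : R -> R) :
  (forall x k, f (x + 2 * INR k * PI) = f x) -> periodic f.
Proof.
move=> Hf x k; case: (Z_le_gt_dec 0 k) => Hk.
  by rewrite -(Z2Nat.id k Hk) -INR_IZR_INZ Hf.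
have E : x = (x + 2 * IZR k * PI) + 2 * INR (Z.to_nat (- k)) * PI.
  rewrite INR_IZR_INZ Z2Nat.id; last lia. rewrite opp_IZR; ring.
by rewrite {2}E Hf.
Qed.

Lemma cos_periodic : periodic cos. Proof. exact: periodic_of_nat cos_period. Qed.
Lemma sin_periodic : periodic sin. Proof. exact: periodic_of_nat sin_period. Qed.

Lemma periodic_mod (f : R -> R) (N t t' : Z) : periodic f ->
  (N <> 0)%Z -> (t mod N = t' mod N)%Z ->
  f (2 * PI * IZR t / IZR N) = f (2 * PI * IZR t' / IZR N).
Proof.
move=> Hf HN Ht.
have -> : t = (t' + N * (t / N - t' / N))%Z.
  have := Z_div_mod_eq_full t N; have := Z_div_mod_eq_full t' N; lia.
have HN' : IZR N <> 0 by apply: not_0_IZR.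
rewrite plus_IZR mult_IZR -[RHS](Hf _ (t / N - t' / N)%Z); congr f; field; auto.
Qed.

Definition ecos (N t : Z) : R := cos (2 * PI * IZR t / IZR N).
Definition esin (N t : Z) : R := sin (2 * PI * IZR t / IZR N).

Lemma ecos_mod (N t t' : Z) : (N <> 0)%Z -> (t mod N = t' mod N)%Z -> ecos N t = ecos N t'.
Proof. exact: periodic_mod cos_periodic. Qed.
Lemma esin_mod (N t t' : Z) : (N <> 0)%Z -> (t mod N = t' mod N)%Z -> esin N t = esin N t'.
Proof. exact: periodic_mod sin_periodic. Qed.

Lemma ecos_mul_cong (N u u' v : Z) : (N <> 0)%Z -> (u mod N = u' mod N)%Z ->
  ecos N (u * v) = ecos N (u' * v).
Proof. by move=> HN Hu; apply: ecos_mod => //; rewrite Zmult_mod Hu -Zmult_mod. Qed.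

Lemma ecos0 (N : Z) : ecos N 0 = 1.
Proof. by rewrite /ecos Rmult_0_r Rdiv_0_l cos_0. Qed.
Lemma esin_opp (N t : Z) : esin N (- t) = - esin N t.
Proof. rewrite /esin opp_IZR -sin_neg; congr sin; lra. Qed.
Lemma ecos_sub (N t u : Z) : ecos N (t - u) = ecos N t * ecos N u + esin N t * esin N u.
Proof. rewrite /ecos /esin -cos_minus minus_IZR; congr cos; lra. Qed.

(* Product-to-sum telescoping: 2 sin a sum_{i<N} cos(2ia) = sin((2N-1)a) + sin a. *)
Lemma sin_telescope (al : R) (N : nat) :
  \big[Rplus/0]_(i < N) (2 * sin al * cos (2 * (INR i * al)))
  = sin ((2 * INR N - 1) * al) + sin al.
Proof.
elim: N => [|N IH].
  rewrite big_ord0 /= (_ : (2 * 0 - 1) * al = - al); last ring.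
  rewrite sin_neg; ring.
rewrite big_ord_recr IH -/(INR N.+1) S_INR /=.
rewrite (_ : (2 * (INR N + 1) - 1) * al = 2 * (INR N * al) + al); last ring.
rewrite (_ : (2 * INR N - 1) * al = 2 * (INR N * al) - al); last ring.
rewrite sin_plus sin_minus; ring.
Qed.

Lemma sum_ecos_multiples (N k : Z) : (0 < N)%Z -> ~ (N | k)%Z ->
  \big[Rplus/0]_(i < Z.to_nat N) ecos N (k * Z.of_nat i) = 0.
Proof.
move=> HN Hk.
set al := PI * IZR k / IZR N.
have HN' : IZR N <> 0 by apply: not_0_IZR; lia.
have Hs : sin al <> 0.
  move=> /sin_eq_0_0 [z Hz]; apply: Hk; exists z; apply: eq_IZR.
  have HPI := PI_neq0.
  rewrite mult_IZR (_ : IZR z = al / PI); last by rewrite Hz; field.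
  by rewrite /al; field.
have := sin_telescope al (Z.to_nat N).
rewrite -big_distrr /= INR_IZR_INZ Z2Nat.id; last lia.
rewrite (_ : (2 * IZR N - 1) * al = - al + 2 * IZR k * PI); last by rewrite /al; field.
rewrite sin_periodic sin_neg Rplus_opp_l.
have -> : \big[Rplus/0]_(i < Z.to_nat N) cos (2 * (INR i * al))
        = \big[Rplus/0]_(i < Z.to_nat N) ecos N (k * Z.of_nat i).
  apply: eq_bigr => i _; rewrite /ecos /al mult_IZR -INR_IZR_INZ; congr cos; field; auto.
move/Rmult_integral => [/Rmult_integral [] //|//]; lra.
Qed.

Lemma big_Rconst (I : finType) (A : pred I) : \big[Rplus/0]_(i | A i) 1 = INR #|A|.
Proof. rewrite big_const; elim: #|A| => [|n IH] //; by rewrite iterS IH S_INR Rplus_comm. Qed.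

Lemma sum_but (I : finType) (i0 : I) (G : I -> R) :
  \big[Rplus/0]_(i | i != i0) G i = \big[Rplus/0]_i G i - G i0.
Proof. by rewrite [in RHS](bigD1 i0) //=; ring. Qed.

Lemma Zmod_nat (m d : nat) : Z.of_nat (m %% d) = (Z.of_nat m mod Z.of_nat d)%Z.
Proof.
case: d => [|d]; first by rewrite modn0 Zmod_0_r.
apply: (Z.mod_unique _ _ (Z.of_nat (m %/ d.+1))).
  left; have := ltn_pmod m (ltn0Sn d); lia.
rewrite {1}(divn_eq m d.+1); lia.
Qed.

Lemma in_zrange (N z : Z) : List.In z (zrange N) <-> (0 <= z < N)%Z.
Proof.
rewrite /zrange in_map_iff; split; first by move=> [i [<- /in_seq]]; lia.
by move=> Hz; exists (Z.to_nat z); split; [lia | apply/in_seq; lia].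
Qed.

Lemma fold_sum (N : Z) (f : Z -> R) :
  fold_right Rplus 0 (List.map f (zrange N)) = \big[Rplus/0]_(i < Z.to_nat N) f (Z.of_nat i).
Proof.
rewrite -(big_mkord xpredT (fun i => f (Z.of_nat i))) /index_iota subn0 /zrange.
elim: (Z.to_nat N) 0%N => [|k IH] s //=; first by rewrite big_nil.
by rewrite big_cons IH.
Qed.

Section PrimeField.
Variable p : nat.
Hypothesis pr : prime p.
Local Notation F := 'F_p.
Local Notation P := (Z.of_nat p).
Local Open Scope ring_scope.
Import GRing.Theory.

Definition zrep (x : F) : Z := Z.of_nat (val x).

Lemma val_ltF (x : F) : (val x < p)%N.
Proof. by move: (ltn_ord x); rewrite {2}(Fp_cast pr). Qed.

Lemma P_pos : (0 < P)%Z.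
Proof. have := prime_gt1 pr; lia. Qed.
Lemma zrep_range x : (0 <= zrep x < P)%Z.
Proof. rewrite /zrep; have := val_ltF x; lia. Qed.
Lemma zrep_mod x : (zrep x mod P = zrep x)%Z.
Proof. exact/Z.mod_small/zrep_range. Qed.
Lemma zrep_nat n : zrep (n%:R) = (Z.of_nat n mod P)%Z.
Proof. by rewrite /zrep /= (val_Fp_nat pr) Zmod_nat. Qed.
Lemma zrep_mul x y : zrep (x * y) = ((zrep x * zrep y) mod P)%Z.
Proof. by rewrite -{1}(natr_Zp x) -{1}(natr_Zp y) -natrM zrep_nat Nat2Z.inj_mul. Qed.
Lemma zrep_add x y : zrep (x + y) = ((zrep x + zrep y) mod P)%Z.
Proof. by rewrite -{1}(natr_Zp x) -{1}(natr_Zp y) -natrD zrep_nat Nat2Z.inj_add. Qed.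
Lemma zrep0 : zrep 0 = 0%Z.
Proof. by []. Qed.
Lemma zrep1 : zrep 1 = 1%Z.
Proof. rewrite -[1]/(1%:R) zrep_nat Z.mod_small //; have := prime_gt1 pr; lia. Qed.
Lemma zrep_inj : injective zrep.
Proof. by move=> x y /Nat2Z.inj /val_inj. Qed.
Lemma zrep_opp (x : F) : (zrep (- x)%ring mod P = (- zrep x) mod P)%Z.
Proof.
have H := zrep_add x (- x); rewrite addrN zrep0 in H.
rewrite (_ : (- zrep x = zrep (- x)%ring - (zrep x + zrep (- x)%ring))%Z); last ring.
by rewrite Zminus_mod -H Z.sub_0_r Zmod_mod.
Qed.

Lemma prime_Z : Znumtheory.prime P.
Proof.
apply/prime_alt; split; first by have := prime_gt1 pr; lia.
move=> d Hd [k Hk].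
have D : (Z.to_nat d %| p)%N by apply/dvdnP; exists (Z.to_nat k); nia.
by have/primeP [_ /(_ _ D)] := pr; lia.
Qed.

Lemma div_one_sub (k : Z) (t : F) : ~ (P | k)%Z -> (P | k * (1 - zrep t))%Z -> t = 1.
Proof.
move=> Hk /(prime_mult _ prime_Z) [//|[z Hz]].
have := zrep_range t; have := prime_gt1 pr => P1 Rt.
have z0 : z = 0%Z by nia.
by apply: zrep_inj; rewrite zrep1; lia.
Qed.

Definition inF (A : Z) : F := (Z.to_nat (A mod P))%:R.

Lemma zrep_inF A : zrep (inF A) = (A mod P)%Z.
Proof. by rewrite /inF zrep_nat Z2Nat.id ?Zmod_mod //; have := Z.mod_pos_bound A P P_pos; lia. Qed.

Lemma inF_zrep (x : F) : inF (zrep x) = x.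
Proof. by apply: zrep_inj; rewrite zrep_inF zrep_mod. Qed.

Lemma inF_eq0 (A : Z) : (inF A == 0) = (A mod P =? 0)%Z.
Proof. by apply/eqP/Z.eqb_spec => [/(congr1 zrep)|H]; [|apply: zrep_inj]; rewrite zrep_inF. Qed.

Lemma sum_Fp (G : nat -> R) :
  \big[Rplus/0%R]_(x : F) G (val x) = \big[Rplus/0%R]_(i < p) G i.
Proof.
have -> : \big[Rplus/0%R]_(x : F) G (val x)
        = \big[Rplus/0%R]_(i < (Zp_trunc (pdiv p)).+2) G i by [].
by rewrite (Fp_cast pr).
Qed.

Lemma sum_ecos_ndiv (K : Z) : ~ (P | K)%Z ->
  \big[Rplus/0%R]_(x : F) ecos P (K * zrep x) = 0%R.
Proof.
move=> HK; rewrite (sum_Fp (fun i => ecos P (K * Z.of_nat i))).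
by have := sum_ecos_multiples P_pos HK; rewrite Nat2Z.id.
Qed.

Lemma ecos_div (K t : Z) : (P | K)%Z -> ecos P (K * t) = 1%R.
Proof.
move=> [z ->]; rewrite -(ecos0 P); apply: ecos_mod; first by have := P_pos; lia.
by rewrite Zmod_0_l (_ : (z * P * t = (z * t) * P)%Z) ?Z_mod_mult //; ring.
Qed.

Lemma sum_ecos_div (K : Z) : (P | K)%Z ->
  \big[Rplus/0%R]_(x : F) ecos P (K * zrep x) = IZR P.
Proof.
move=> HK; under eq_bigr => x _ do rewrite ecos_div //.
by rewrite big_Rconst cardT -cardE card_Fp // INR_IZR_INZ.
Qed.

Lemma sum_even_esin (w : F -> R) (k : Z) : (forall x, w (- x) = w x) ->
  \big[Rplus/0%R]_(x : F) (w x * esin P (k * zrep x))%R = 0%R.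
Proof.
move=> Hw; set S := \big[Rplus/0%R]_(x : F) _.
suff : S = (- S)%R by lra.
rewrite {1}/S (reindex_inj oppr_inj) /= /S (big_morph Ropp Ropp_plus_distr Ropp_0).
apply: eq_bigr => x _; rewrite Hw Ropp_mult_distr_r -esin_opp; congr Rmult; apply: esin_mod.
  by have := P_pos; lia.
by rewrite Zmult_mod zrep_opp -Zmult_mod; congr Z.modulo; ring.
Qed.

(* Euler's criterion: x != 0 is a square iff x^((p-1)/2) = 1; with h = (p-1)/2. *)
Definition h := (p.-1)./2.
Hypothesis p4 : (p %% 4 = 1)%N.

Lemma h2 : (h * 2 = p.-1)%N.
Proof. rewrite /h; have := prime_gt1 pr; lia. Qed.
Lemma h_even : ~~ odd h.
Proof. rewrite /h; have := prime_gt1 pr; lia. Qed.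
Lemma h_gt0 : (0 < h)%N.
Proof. rewrite /h; have := prime_gt1 pr; lia. Qed.

Lemma fermatF (x : F) : x != 0 -> x ^+ p.-1 = 1.
Proof.
move=> nz; apply: (mulfI nz); rewrite mulr1 -exprS prednK ?prime_gt0 //.
by rewrite -{2}(expf_card x) card_Fp.
Qed.

(* x^h is a square root of 1, hence 1 or -1 (and -1 != 1 as p > 2). *)
Lemma xh_pm1 (x : F) : x != 0 -> (x ^+ h == 1) || (x ^+ h == -1).
Proof. by move=> nz; rewrite -sqrf_eq1 -exprM h2 fermatF. Qed.

Lemma m1_neq1 : (-1 : F) != 1.
Proof.
apply/eqP => E; have : (2%:R : F) = 0 by rewrite -[2%N]/(1 + 1)%N natrD -{1}E addNr.
move/(congr1 (@nat_of_ord _)); rewrite /= (Fp_cast pr) !modn_small //;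
  have := prime_gt1 pr; lia.
Qed.

(* The squares of 1, ..., h are pairwise distinct quadratic residues, hence all of them. *)
Lemma sqr_inj (i j : nat) : (0 < i <= h)%N -> (0 < j <= h)%N ->
  (i%:R : F) ^+ 2 = (j%:R) ^+ 2 -> i = j.
Proof.
move=> Hi Hj /eqP; rewrite -subr_eq0 subr_sqr mulf_eq0 => /orP [|].
  rewrite subr_eq0 => /eqP /(congr1 (@nat_of_ord _)); rewrite /= !(val_Fp_nat pr) !modn_small //.
  - by have := h2; lia.
  - by have := h2; lia.
rewrite -natrD => /eqP /(congr1 (@nat_of_ord _)); rewrite /= (val_Fp_nat pr) modn_small //.
  lia.
by have := h2; lia.
Qed.

Definition QR : {set F} := [set x : F | x ^+ h == 1].
Definition sqf (i : 'I_h) : F := (i.+1)%:R ^+ 2.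

Lemma sqf_inj : injective sqf.
Proof.
move=> i j /sqr_inj H; apply: val_inj; apply: succn_inj; apply: H.
- by have := ltn_ord i; lia.
- by have := ltn_ord j; lia.
Qed.

Lemma sqf_QR : sqf @: setT \subset QR.
Proof.
apply/subsetP => x /imsetP [i _ ->]; rewrite inE /sqf -exprM mulnC h2 fermatF //.
apply/eqP => /(congr1 (@nat_of_ord _)); rewrite /= (val_Fp_nat pr) modn_small //.
have := ltn_ord i; have := h2; lia.
Qed.

Lemma card_QR : #|QR| = h.
Proof.
apply/eqP; rewrite eqn_leq; apply/andP; split.
  rewrite cardE; apply: max_unity_roots; first exact: h_gt0.
    by apply/allP => x; rewrite mem_enum inE unity_rootE.
  exact: enum_uniq.
have := subset_leq_card sqf_QR; rewrite card_imset; last exact: sqf_inj.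
by rewrite cardsT card_ord.
Qed.

Lemma QR_sqf : QR = sqf @: setT.
Proof.
apply/eqP; rewrite eq_sym eqEcard sqf_QR card_QR card_imset; last exact: sqf_inj.
by rewrite cardsT card_ord andTb leqnn.
Qed.

Lemma QR_square (x : F) : x != 0 -> (x ^+ h == 1) = [exists t, t * t == x].
Proof.
move=> nz; apply/idP/existsP.
  move=> H; have : x \in QR by rewrite inE.
  by rewrite QR_sqf => /imsetP [i _ ->]; exists (i.+1)%:R; rewrite /sqf expr2.
move=> [t /eqP E]; rewrite -E -expr2 -exprM mulnC h2 fermatF //.
by apply: contra nz; rewrite -E => /eqP ->; rewrite mul0r.
Qed.

(* Only half of the nonzero elements are squares, so a nonresidue exists. *)
Lemma exists_nonres : exists r : F, (r != 0) && (r ^+ h != 1).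
Proof.
apply/existsP; apply: contraT; rewrite negb_exists => /forallP H.
have : [set~ (0 : F)] \subset QR.
  by apply/subsetP => x; rewrite !inE => nz; have := H x; rewrite nz /= negbK.
move/subset_leq_card; rewrite cardsC1 card_QR card_Fp // /h; have := prime_gt1 pr; lia.
Qed.

Definition chi (x : F) : R := if x == 0 then 0%R else if x ^+ h == 1 then 1%R else (-1)%R.

Lemma chi0 : chi 0 = 0%R. Proof. by rewrite /chi eqxx. Qed.
Lemma chi1 : chi 1 = 1%R. Proof. by rewrite /chi oner_eq0 expr1n eqxx. Qed.

Lemma chi_mul x y : chi (x * y) = (chi x * chi y)%R.
Proof.
rewrite /chi mulf_eq0.
case: eqP => [_|/eqP nx] /=; first lra.
case: eqP => [_|/eqP ny] /=; first lra.
have m1 := m1_neq1; rewrite exprMn.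
case/orP: (xh_pm1 nx) => /eqP ->; case/orP: (xh_pm1 ny) => /eqP ->;
  rewrite ?mul1r ?mulr1 ?mulrNN ?mulr1 ?eqxx ?(negbTE m1) /=; lra.
Qed.

(* Since p = 1 mod 4, -1 is a square and chi is even. *)
Lemma chi_opp x : chi (- x) = chi x.
Proof. by rewrite /chi oppr_eq0 exprNn -signr_odd (negbTE h_even) expr0 mul1r. Qed.

Lemma chi_sq x : x != 0 -> (chi x * chi x = 1)%R.
Proof. by move=> nx; rewrite /chi (negbTE nx); case: ifP => _; lra. Qed.

Lemma chi_vals x : x != 0 -> chi x = 1%R \/ chi x = (-1)%R.
Proof. by move=> nx; rewrite /chi (negbTE nx); case: ifP; auto. Qed.

Lemma chi_inv (c : F) : c != 0 -> chi (c^-1) = chi c.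
Proof.
move=> nc; have := chi_mul c (c^-1); rewrite mulfV // chi1.
by case: (chi_vals nc) => ->; case: (chi_vals (x := c^-1) _); rewrite ?invr_eq0 // => ->; lra.
Qed.

(* Orthogonality of chi: it sums to 0 (shift by a nonresidue), chi^2 to p - 1. *)
Lemma sum_chi : \big[Rplus/0%R]_(x : F) chi x = 0%R.
Proof.
have [r /andP [nr hr]] := exists_nonres.
have cr : chi r = (-1)%R by rewrite /chi (negbTE nr) (negbTE hr).
set S := \big[Rplus/0%R]_(x : F) _.
suff : S = (- S)%R by lra.
rewrite {1}/S (reindex_inj (mulfI nr)) /= /S (big_morph Ropp Ropp_plus_distr Ropp_0).
by apply: eq_bigr => x _; rewrite chi_mul cr; ring.
Qed.

Lemma sum_chi2 : \big[Rplus/0%R]_(x : F) (chi x * chi x)%R = (IZR P - 1)%R.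
Proof.
rewrite (bigD1 0) //= chi0 Rmult_0_l Rplus_0_l.
rewrite (eq_bigr (fun _ => 1%R)) => [|x /chi_sq //].
rewrite big_Rconst cardC1 card_Fp // -INR_IZR_INZ -{2}(prednK (prime_gt0 pr)) S_INR; ring.
Qed.

(* The quadratic Gauss sum g_k = sum_x chi(x) e(kx/p); it is real because chi is even. *)
Definition gauss_sum (k : Z) : R := \big[Rplus/0%R]_(x : F) (chi x * ecos P (k * zrep x))%R.

Lemma gauss_sum_sq_double (k : Z) : (gauss_sum k * gauss_sum k)%R =
  \big[Rplus/0%R]_(x : F) \big[Rplus/0%R]_(y : F)
    (chi x * chi y * ecos P (k * zrep x - k * zrep y))%R.
Proof.
set g := gauss_sum k; set s := \big[Rplus/0%R]_(x : F) (chi x * esin P (k * zrep x))%R.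
have Hs : s = 0%R by apply: sum_even_esin; exact: chi_opp.
transitivity (g * g + s * s)%R; first by rewrite Hs; ring.
have -> : (g * g + s * s)%R = \big[Rplus/0%R]_(x : F)
    ((chi x * ecos P (k * zrep x)) * g + (chi x * esin P (k * zrep x)) * s)%R.
  by rewrite big_split /= -!big_distrl.
apply: eq_bigr => x _; rewrite /g /gauss_sum /s !big_distrr -big_split /=.
by apply: eq_bigr => y _; rewrite ecos_sub; ring.
Qed.

(* For x != 0, substituting y = x t in the inner sum. *)
Lemma gauss_row (k : Z) (x : F) : x != 0 ->
  \big[Rplus/0%R]_(y : F) (chi x * chi y * ecos P (k * zrep x - k * zrep y))%R =
  \big[Rplus/0%R]_(t : F) (chi t * ecos P ((k * (1 - zrep t)) * zrep x))%R.
Proof.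
move=> nx; rewrite (reindex_inj (mulfI nx)) /=.
apply: eq_bigr => t _; rewrite chi_mul -Rmult_assoc chi_sq // Rmult_1_l.
congr Rmult; apply: ecos_mod; first by have := P_pos; lia.
rewrite zrep_mul (Z.mod_eq (zrep x * zrep t)); last by have := P_pos; lia.
set w := (zrep x * zrep t)%Z.
rewrite (_ : (k * zrep x - k * (w - P * (w / P))
              = k * (1 - zrep t) * zrep x + (k * (w / P)) * P)%Z).
  by rewrite Z_mod_plus_full.
by rewrite /w; ring.
Qed.

Lemma gauss_column (k : Z) (t : F) : ~ (P | k)%Z ->
  \big[Rplus/0%R]_(x | x != 0) ecos P ((k * (1 - zrep t)) * zrep x) =
  ((if t == 1%ring then IZR P else 0%R) - 1)%R.
Proof.
move=> Hk; rewrite (sum_but 0 (fun x => ecos P (k * (1 - zrep t) * zrep x))) zrep0 Z.mul_0_r ecos0.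
case: eqP => [->|/eqP nt].
  by rewrite zrep1 Z.sub_diag Z.mul_0_r sum_ecos_div //; exists 0%Z.
rewrite sum_ecos_ndiv; first ring.
by move/(div_one_sub Hk) => E; rewrite E eqxx in nt.
Qed.

(* The classical evaluation g_k^2 = p for p not dividing k, obtained from the double sum
   by exchanging summations and using the orthogonality relations. *)
Lemma gauss_sum_sq (k : Z) : ~ (P | k)%Z -> (gauss_sum k * gauss_sum k = IZR P)%R.
Proof.
move=> Hk; rewrite gauss_sum_sq_double (bigD1 0) //= big1 => [|y _]; last first.
  by rewrite chi0 !Rmult_0_l.
rewrite Rplus_0_l.
under eq_bigr => x nx do rewrite gauss_row //.
rewrite exchange_big /=.
under eq_bigr => t _ do rewrite -big_distrr /= gauss_column //.
rewrite (bigD1 1) //= chi1.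
rewrite (eq_bigr (fun t => - chi t)%R) => [|t /negbTE ->]; last ring.
rewrite -(big_morph Ropp Ropp_plus_distr Ropp_0) sum_but sum_chi chi1; ring.
Qed.

(* The indicator of the nonzero squares, (chi^2 + chi)/2, and the quadratic period
   eta_k = sum_{x square} e(kx/p) written as a weighted sum over 'F_p. *)
Definition sq_weight (x : F) : R := ((chi x * chi x + chi x) / 2)%R.
Definition eta (k : Z) : R := \big[Rplus/0%R]_(x : F) (sq_weight x * ecos P (k * zrep x))%R.

(* -1 is a square, so the imaginary part of eta_k vanishes. *)
Lemma eta_imaginary (k : Z) :
  \big[Rplus/0%R]_(x : F) (sq_weight x * esin P (k * zrep x))%R = 0%R.
Proof. by apply: sum_even_esin => x; rewrite /sq_weight chi_opp. Qed.

Lemma eta_div (k : Z) : (P | k)%Z -> (2 * eta k)%R = (IZR P - 1)%R.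
Proof.
move=> Hk; rewrite /eta big_distrr /=.
rewrite (eq_bigr (fun x => chi x * chi x + chi x)%R) => [|x _]; last first.
  by rewrite ecos_div // /sq_weight; field.
by rewrite big_split /= sum_chi2 sum_chi Rplus_0_r.
Qed.

(* Multiplying by a nonresidue r exchanges squares and nonsquares: if inF C * r = inF A
   with chi r = -1, then eta_{CY} is the sum of e(AYx/p) over the nonzero nonsquares x. *)
Lemma eta_nonres (A C Y : Z) (r : F) : r != 0 -> chi r = (-1)%R -> inF C * r = inF A ->
  eta (C * Y) = \big[Rplus/0%R]_(x : F) (((chi x * chi x - chi x) / 2) * ecos P (A * Y * zrep x))%R.
Proof.
move=> nr cr Hr; have P0 : P <> 0%Z by have := P_pos; lia.
rewrite /eta (reindex_inj (mulfI nr)) /=; apply: eq_bigr => x _.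
congr Rmult; first by rewrite /sq_weight chi_mul cr; field.
rewrite (ecos_mod (t' := (C * Y * (zrep r * zrep x))%Z)) //; last first.
  by rewrite zrep_mul Zmult_mod Zmod_mod -Zmult_mod.
rewrite (_ : (C * Y * (zrep r * zrep x) = (C * zrep r) * (Y * zrep x))%Z); last ring.
rewrite (_ : (A * Y * zrep x = A * (Y * zrep x))%Z); last ring.
apply: ecos_mul_cong => //.
by rewrite -[RHS]zrep_inF -Hr zrep_mul zrep_inF Zmult_mod_idemp_l.
Qed.

Lemma eta_pair (A C Y : Z) : inF A != 0 -> chi (inF A) = (- chi (inF C))%R -> ~ (P | Y)%Z ->
  (eta (A * Y) + eta (C * Y) = -1)%R /\
  ((eta (A * Y) - eta (C * Y)) * (eta (A * Y) - eta (C * Y)) = IZR P)%R.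
Proof.
move=> na hac HY.
have nc : inF C != 0 by apply: contraNneq na => c0; move: hac; rewrite c0 chi0 Ropp_0 /chi;
  case: eqP => // _; case: ifP => _; lra.
set r := inF A / inF C.
have nr : r != 0 by rewrite mulf_eq0 negb_or na invr_eq0.
have cr : chi r = (-1)%R.
  by rewrite /r chi_mul chi_inv // hac; case: (chi_vals nc) => ->; lra.
have Hr : inF C * r = inF A by rewrite /r mulrC divfK.
have HAY : ~ (P | A * Y)%Z.
  move=> /(prime_mult _ prime_Z) [HA|//]; move: na; rewrite inF_eq0.
  by move/Z.mod_divide: HA => /(_ ltac:(have := P_pos; lia)) ->.
rewrite (eta_nonres (A := A) Y nr cr Hr) /eta; split.
  rewrite -big_split /=.
  rewrite (eq_bigr (fun x => chi x * chi x * ecos P (A * Y * zrep x))%R) => [|x _]; last first.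
    by rewrite /sq_weight; field.
  rewrite (bigD1 0) //= chi0 Rmult_0_l Rmult_0_l Rplus_0_l.
  rewrite (eq_bigr (fun x => ecos P (A * Y * zrep x))) => [|x /chi_sq ->]; last ring.
  by rewrite sum_but sum_ecos_ndiv // zrep0 Z.mul_0_r ecos0; ring.
have -> : forall u v : R, (u - v = u + - v)%R by move=> *; ring.
rewrite (big_morph Ropp Ropp_plus_distr Ropp_0) -big_split /=.
rewrite (eq_bigr (fun x => chi x * ecos P (A * Y * zrep x))%R) => [|x _]; last first.
  by rewrite /sq_weight; field.
exact: gauss_sum_sq.
Qed.

Lemma existsb_F (f : Z -> bool) : List.existsb f (zrange P) = [exists t : F, f (zrep t)].
Proof.
apply/idP/existsP.
  move/List.existsb_exists => [z [/in_zrange Hz fz]].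
  by exists (inF z); rewrite zrep_inF Z.mod_small.
move=> [t ft]; apply/List.existsb_exists; exists (zrep t); split => //.
exact/in_zrange/zrep_range.
Qed.

Lemma is_qr_F (A : Z) : is_qr P A = [exists t : F, t * t == inF A].
Proof.
rewrite /is_qr existsb_F; apply: eq_existsb => t.
apply/Z.eqb_spec/eqP => [H|/(congr1 zrep)]; last by rewrite zrep_mul zrep_inF.
by apply: zrep_inj; rewrite zrep_mul zrep_inF.
Qed.

Lemma legendre_F (A : Z) : IZR (legendre A P) = chi (inF A).
Proof.
rewrite /legendre /chi inF_eq0; case: Z.eqb_spec => [//|nA].
have nzA : inF A != 0 by rewrite inF_eq0; apply/Z.eqb_spec.
by rewrite is_qr_F -QR_square //; case: ifP.
Qed.

Lemma inQ_F (x : F) : inQ P (zrep x) = (x != 0) && (x ^+ h == 1).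
Proof.
rewrite /inQ is_qr_F inF_zrep.
have [-> //|nx] := eqVneq x 0.
have Rx := zrep_range x; have : zrep x <> 0%Z by move=> E; move/eqP: nx; apply; apply: zrep_inj.
by rewrite -QR_square // => ?; have -> : (0 <? zrep x)%Z && (zrep x <? P)%Z by apply/andP; lia.
Qed.

Lemma sum_inQ (G : Z -> R) :
  \big[Rplus/0%R]_(i < Z.to_nat P) (if inQ P (Z.of_nat i) then G (Z.of_nat i) else 0%R)
  = \big[Rplus/0%R]_(x : F) (sq_weight x * G (zrep x))%R.
Proof.
rewrite Nat2Z.id -(sum_Fp (fun i => if inQ P (Z.of_nat i) then G (Z.of_nat i) else 0%R)).
apply: eq_bigr => x _; rewrite -[Z.of_nat (val x)]/(zrep x) inQ_F /sq_weight /chi.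
by case: eqP => [_|_] /=; [|case: ifP => _]; field.
Qed.

Lemma qperiod_eta (k : Z) : qperiod P k = eta k.
Proof. by rewrite /qperiod fold_sum (sum_inQ (fun q => cos (2 * PI * IZR (k * q) / IZR P))). Qed.

End PrimeField.

Lemma existsb_as_sum (M : Z) (Pj : Z -> bool) (T : Z -> Z -> bool) (g : Z -> Z) (x : Z) (v : R) :
  (0 <= M)%Z -> (forall x j, T x j = (x =? g j)%Z) ->
  (forall j j', (0 <= j < M)%Z -> (0 <= j' < M)%Z -> g j = g j' -> j = j') ->
  (if List.existsb (fun j => Pj j && T x j) (zrange M) then v else 0%R)
  = \big[Rplus/0%R]_(j < Z.to_nat M)
      (if Pj (Z.of_nat j) && (x =? g (Z.of_nat j))%Z then v else 0%R).
Proof.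
move=> HM HT Hinj; case E: List.existsb; last first.
  rewrite big1 // => j _; case H: (_ && _) => //.
  suff : true = false by []; rewrite -E; symmetry.
  apply/List.existsb_exists; exists (Z.of_nat j); rewrite HT.
  by split => //; apply/in_zrange; have := ltn_ord j; lia.
move/List.existsb_exists: E => [j0 [/in_zrange Hj0 /andP [P0]]].
rewrite HT => /Z.eqb_eq x_g.
have Hk : (Z.to_nat j0 < Z.to_nat M)%N by lia.
rewrite (bigD1 (Ordinal Hk)) //= Z2Nat.id; last lia.
rewrite P0 x_g Z.eqb_refl big1 ?Rplus_0_r // => j /eqP Hj.
case H: (_ && _) => //; move/andP: H => [_ /Z.eqb_eq H]; exfalso; apply: Hj.
apply: val_inj => /=; have := ltn_ord j => Hjr.
by have := Hinj _ _ (conj (Zle_0_nat j) (ltac:(lia) : (Z.of_nat j < M)%Z)) Hj0 (esym H); lia.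
Qed.

Lemma sum_existsb_image (M N : Z) (Pj : Z -> bool) (T : Z -> Z -> bool) (g : Z -> Z) (G : Z -> R) :
  (0 <= M)%Z -> (forall x j, T x j = (x =? g j)%Z) ->
  (forall j, (0 <= j < M)%Z -> (0 <= g j < N)%Z) ->
  (forall j j', (0 <= j < M)%Z -> (0 <= j' < M)%Z -> g j = g j' -> j = j') ->
  \big[Rplus/0%R]_(i < Z.to_nat N)
     (if List.existsb (fun j => Pj j && T (Z.of_nat i) j) (zrange M) then G (Z.of_nat i) else 0%R)
  = \big[Rplus/0%R]_(j < Z.to_nat M) (if Pj (Z.of_nat j) then G (g (Z.of_nat j)) else 0%R).
Proof.
move=> HM HT Hg Hinj.
under eq_bigr => i _ do rewrite (existsb_as_sum _ _ _ HM HT Hinj).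
rewrite exchange_big /=; apply: eq_bigr => j _.
case Pjj: (Pj _) => /=; last by rewrite big1.
have Hj : (0 <= Z.of_nat j < M)%Z by have := ltn_ord j; lia.
have Hk : (Z.to_nat (g (Z.of_nat j)) < Z.to_nat N)%N by have := Hg _ Hj; lia.
rewrite (bigD1 (Ordinal Hk)) //= Z2Nat.id; last by have := Hg _ Hj; lia.
rewrite Z.eqb_refl big1 ?Rplus_0_r // => i /eqP Hi.
case H: (_ =? _)%Z => //; exfalso; apply: Hi; apply: val_inj => /=.
by move/Z.eqb_eq: H => <-; lia.
Qed.

Section Pieces.
Variable p : nat.
Hypothesis pr : prime p.
Hypothesis p4 : (p %% 4 = 1)%N.
Local Notation F := 'F_p.
Local Notation P := (Z.of_nat p).

Lemma offset_inj (n m E : Z) : n = (P * m)%Z -> (0 < m)%Z ->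
  forall j j', (0 <= j < P)%Z -> (0 <= j' < P)%Z ->
  ((j * (n / P) + E) mod n = (j' * (n / P) + E) mod n)%Z -> j = j'.
Proof.
move=> Hn Hm j j' Hj Hj'; have Pp := P_pos pr.
have -> : (n / P = m)%Z by rewrite Hn Z.mul_comm Z.div_mul; lia.
move=> H; have [z Hz] : (n | (j * m + E) - (j' * m + E))%Z.
  by apply/Z.mod_divide; [nia | rewrite Zminus_mod H Z.sub_diag Zmod_0_l].
have : ((j - j') * m = (z * P) * m)%Z by rewrite -Z.mul_assoc -Hn -Hz; ring.
move/Z.mul_reg_r => /(_ ltac:(lia)) Hjj.
have : z = 0%Z by nia.
lia.
Qed.

Lemma affine_inj (A B : Z) : Z.gcd A P = 1%Z ->
  forall q q', (0 <= q < P)%Z -> (0 <= q' < P)%Z ->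
  ((A * q + B) mod P = (A * q' + B) mod P)%Z -> q = q'.
Proof.
move=> HA q q' Hq Hq' H; have Pp := P_pos pr.
have D : (P | A * (q - q'))%Z.
  apply/Z.mod_divide; first lia.
  rewrite (_ : (A * (q - q') = (A * q + B) - (A * q' + B))%Z); last ring.
  by rewrite Zminus_mod H Z.sub_diag Zmod_0_l.
have RP : rel_prime P A by apply: rel_prime_sym; apply/Zgcd_1_rel_prime.
have [z Hz] := Gauss _ _ _ D RP.
have : z = 0%Z by nia.
lia.
Qed.

Lemma piece_term (f : R -> R) (n m A B E y q : Z) : periodic f -> n = (P * m)%Z -> (0 < m)%Z ->
  f (2 * PI * IZR ((((A * q + B) mod P * (n / P) + E) mod n) * y) / IZR n)
  = f (2 * PI * IZR (A * y * q) / IZR P +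
       (2 * PI * IZR (B * y) / IZR P + 2 * PI * IZR (E * y) / IZR n)).
Proof.
move=> Hf Hn Hm; have Pp := P_pos pr.
have -> : (n / P = m)%Z by rewrite Hn Z.mul_comm Z.div_mul; lia.
set w := (A * q + B)%Z.
rewrite (periodic_mod (t' := ((w * m + E) * y)%Z) Hf); last first.
- rewrite Zmult_mod_idemp_l (Z.mod_eq w P); last lia.
  rewrite (_ : (((w - P * (w / P)) * m + E) * y = (w * m + E) * y + (- (w / P) * y) * n)%Z).
    by rewrite Z_mod_plus_full.
  by rewrite Hn; ring.
- lia.
have HP : IZR P <> 0%R by apply: not_0_IZR; lia.
have HM : IZR m <> 0%R by apply: not_0_IZR; lia.
by congr f; rewrite Hn /w !(mult_IZR, plus_IZR); field.
Qed.

Lemma sum_piece (n m A B E y : Z) (f : R -> R) : periodic f -> n = (P * m)%Z -> (0 < m)%Z ->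
  Z.gcd A P = 1%Z ->
  \big[Rplus/0%R]_(i < Z.to_nat n)
    (if List.existsb (fun j => List.existsb (fun q => inQ P q && ((A * q + B) mod P =? j)%Z)
                                 (zrange P) && (Z.of_nat i =? (j * (n / P) + E) mod n)%Z) (zrange P)
     then f (2 * PI * IZR (Z.of_nat i * y) / IZR n) else 0%R)
  = \big[Rplus/0%R]_(x : F) (sq_weight x * f (2 * PI * IZR (A * y * zrep x) / IZR P +
        (2 * PI * IZR (B * y) / IZR P + 2 * PI * IZR (E * y) / IZR n)))%R.
Proof.
move=> Hf Hn Hm HA; have Pp := P_pos pr.
rewrite (@sum_existsb_image P n
   (fun j => List.existsb (fun q => inQ P q && ((A * q + B) mod P =? j)%Z) (zrange P))
   (fun x j => (x =? (j * (n / P) + E) mod n)%Z) (fun j => ((j * (n / P) + E) mod n)%Z)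
   (fun x => f (2 * PI * IZR (x * y) / IZR n))); first last.
- by move=> j j'; apply: (offset_inj Hn Hm).
- by move=> j _; apply: Z.mod_pos_bound; nia.
- by [].
- lia.
rewrite (@sum_existsb_image P P (inQ P) (fun x q => ((A * q + B) mod P =? x)%Z)
   (fun q => ((A * q + B) mod P)%Z)
   (fun j => f (2 * PI * IZR (((j * (n / P) + E) mod n) * y) / IZR n))); first last.
- by move=> q q'; apply: (affine_inj HA).
- by move=> j _; apply: Z.mod_pos_bound; lia.
- by move=> x j; rewrite Z.eqb_sym.
- lia.
rewrite (sum_inQ pr p4 (fun q => f (2 * PI * IZR ((((A * q + B) mod P * (n / P) + E) mod n) * y)
  / IZR n))).
by apply: eq_bigr => x _; rewrite (piece_term _ _ _ _ _ Hf Hn Hm).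
Qed.

Lemma sigma_split (f : R -> R) (n m a b c y : Z) : periodic f -> n = (P * m)%Z -> (0 < m)%Z ->
  Z.gcd a P = 1%Z -> Z.gcd c P = 1%Z ->
  (forall x, (0 <= x < n)%Z -> inAplus n P a b x && inAminus n P c b x = false) ->
  fold_right Rplus 0%R (List.map (fun x => if inA n P a b c x
                                         then f (2 * PI * IZR (x * y) / IZR n) else 0%R) (zrange n))
  = (\big[Rplus/0%R]_(x : F)
       (sq_weight x * f (2 * PI * IZR (a * y * zrep x) / IZR P + phase n P b y))
   + \big[Rplus/0%R]_(x : F)
       (sq_weight x * f (2 * PI * IZR (c * y * zrep x) / IZR P + - phase n P b y)))%R.
Proof.
move=> Hf Hn Hm Ha Hc Hdisj.
have Hplus : \big[Rplus/0%R]_(i < Z.to_nat n) (if inAplus n P a b (Z.of_nat i)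
        then f (2 * PI * IZR (Z.of_nat i * y) / IZR n) else 0%R)
  = \big[Rplus/0%R]_(x : F)
      (sq_weight x * f (2 * PI * IZR (a * y * zrep x) / IZR P + phase n P b y))%R.
  rewrite /phase (_ : IZR y = IZR (1 * y)); last by rewrite Z.mul_1_l.
  exact: (sum_piece b 1 y Hf Hn Hm Ha).
have Hminus : \big[Rplus/0%R]_(i < Z.to_nat n) (if inAminus n P c b (Z.of_nat i)
        then f (2 * PI * IZR (Z.of_nat i * y) / IZR n) else 0%R)
  = \big[Rplus/0%R]_(x : F)
      (sq_weight x * f (2 * PI * IZR (c * y * zrep x) / IZR P + - phase n P b y))%R.
  have -> : phase n P b y = (- (2 * PI * IZR (- b * y) / IZR P + 2 * PI * IZR (-1 * y) / IZR n))%R.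
    by rewrite /phase !mult_IZR !opp_IZR; field; split; apply: not_0_IZR; nia.
  under [in RHS]eq_bigr => x _ do rewrite Ropp_involutive.
  exact: (sum_piece (- b) (-1) y Hf Hn Hm Hc).
rewrite fold_sum -Hplus -Hminus -big_split; apply: eq_bigr => i _ /=.
have := Hdisj (Z.of_nat i) (ltac:(have := ltn_ord i; lia)).
by rewrite /inA; case: (inAplus _ _ _ _ _); case: (inAminus _ _ _ _ _) => //= _; ring.
Qed.

(* Since eta_k is real, shifting the phase by theta multiplies it by e(theta). *)
Lemma eta_shift_cos (k : Z) (th : R) :
  \big[Rplus/0%R]_(x : F) (sq_weight x * cos (2 * PI * IZR (k * zrep x) / IZR P + th))%R
  = (eta p k * cos th)%R.
Proof.
transitivity (\big[Rplus/0%R]_(x : F) (sq_weight x * ecos P (k * zrep x) * cos th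
                                      + - (sq_weight x * esin P (k * zrep x) * sin th)))%R.
  by apply: eq_bigr => x _; rewrite cos_plus /ecos /esin; ring.
rewrite big_split /= -(big_morph Ropp Ropp_plus_distr Ropp_0) -!big_distrl /=.
by rewrite (eta_imaginary pr p4) Rmult_0_l Ropp_0 Rplus_0_r.
Qed.

Lemma eta_shift_sin (k : Z) (th : R) :
  \big[Rplus/0%R]_(x : F) (sq_weight x * sin (2 * PI * IZR (k * zrep x) / IZR P + th))%R
  = (eta p k * sin th)%R.
Proof.
transitivity (\big[Rplus/0%R]_(x : F) (sq_weight x * esin P (k * zrep x) * cos th
                                      + sq_weight x * ecos P (k * zrep x) * sin th))%R.
  by apply: eq_bigr => x _; rewrite sin_plus /ecos /esin; ring.
by rewrite big_split /= -!big_distrl /= (eta_imaginary pr p4) Rmult_0_l Rplus_0_l.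
Qed.
End Pieces.

Lemma prime_to_nat (p : Z) : Znumtheory.prime p -> (p mod 4 = 1)%Z ->
  exists pn : nat, [/\ p = Z.of_nat pn, prime pn & (pn %% 4 = 1)%N].
Proof.
move=> Hp Hp4; have P2 := prime_ge_2 _ Hp.
exists (Z.to_nat p); have Ep : p = Z.of_nat (Z.to_nat p) by lia.
split=> //; last by have := Zmod_nat (Z.to_nat p) 4; rewrite -Ep Hp4; lia.
apply/primeP; split; first lia.
move=> d /dvdnP [k Hk].
have : (Z.of_nat d | p)%Z by exists (Z.of_nat k); rewrite Ep Hk; lia.
by move/(prime_divisors _ Hp) => [|[|[|]]] H; apply/orP; lia.
Qed.

Lemma sigma_re_formula (n p a b c y : Z) : (0 < n)%Z -> Znumtheory.prime p -> (p mod 4 = 1)%Z ->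
  (p | n)%Z -> Z.gcd a p = 1%Z -> Z.gcd c p = 1%Z ->
  (forall x, (0 <= x < n)%Z -> inAplus n p a b x && inAminus n p c b x = false) ->
  sigma_re n (inA n p a b c) y = ((qperiod p (a * y) + qperiod p (c * y)) * cos (phase n p b y))%R.
Proof.
move=> Hn Hp Hp4 [m Hm] Ha Hc Hdisj; have Hm0 : (0 < m)%Z by have := prime_ge_2 _ Hp; nia.
have [pn [Ep pr p4]] := prime_to_nat Hp Hp4; subst p.
rewrite /sigma_re (sigma_split pr p4 (m := m) y cos_periodic) //; last lia.
by rewrite !(eta_shift_cos pr p4) !(qperiod_eta pr p4) cos_neg; ring.
Qed.

Lemma sigma_im_formula (n p a b c y : Z) : (0 < n)%Z -> Znumtheory.prime p -> (p mod 4 = 1)%Z ->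
  (p | n)%Z -> Z.gcd a p = 1%Z -> Z.gcd c p = 1%Z ->
  (forall x, (0 <= x < n)%Z -> inAplus n p a b x && inAminus n p c b x = false) ->
  sigma_im n (inA n p a b c) y = ((qperiod p (a * y) - qperiod p (c * y)) * sin (phase n p b y))%R.
Proof.
move=> Hn Hp Hp4 [m Hm] Ha Hc Hdisj; have Hm0 : (0 < m)%Z by have := prime_ge_2 _ Hp; nia.
have [pn [Ep pr p4]] := prime_to_nat Hp Hp4; subst p.
rewrite /sigma_im (sigma_split pr p4 (m := m) y sin_periodic) //; last lia.
by rewrite !(eta_shift_sin pr p4) !(qperiod_eta pr p4) sin_neg; ring.
Qed.

Lemma qperiod_div (p k : Z) : Znumtheory.prime p -> (p mod 4 = 1)%Z -> (p | k)%Z ->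
  (2 * qperiod p k = IZR p - 1)%R.
Proof.
move=> Hp Hp4 Hk; have [pn [Ep pr p4]] := prime_to_nat Hp Hp4; subst p.
by rewrite (qperiod_eta pr p4) (eta_div pr p4).
Qed.

Lemma qperiod_pair (p a c y : Z) : Znumtheory.prime p -> (p mod 4 = 1)%Z -> Z.gcd a p = 1%Z ->
  legendre a p = (- legendre c p)%Z -> ~ (p | y)%Z ->
  (qperiod p (a * y) + qperiod p (c * y) = -1)%R /\
  ((qperiod p (a * y) - qperiod p (c * y)) ^ 2 = IZR p)%R.
Proof.
move=> Hp Hp4 Ha Hleg Hy; have P2 := prime_ge_2 _ Hp.
have [pn [Ep pr p4]] := prime_to_nat Hp Hp4; subst p.
rewrite !(qperiod_eta pr p4) -Rsqr_pow2; apply: (eta_pair pr p4) => //.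
  rewrite (inF_eq0 pr); apply/Z.eqb_spec => Hmod.
  have Hpa := proj1 (Z.mod_divide a (Z.of_nat pn) ltac:(lia)) Hmod.
  have := Z.gcd_greatest _ _ _ Hpa (Z.divide_refl _); rewrite Ha.
  by move/(Z.divide_pos_le _ _ Z.lt_0_1); lia.
by rewrite -!(legendre_F pr p4) Hleg opp_IZR.
Qed.

End QuadraticPeriods.

Theorem proposition5p1 (n p a b c : Z) (Hn : (0 < n)%Z)
  (Hp : prime p) (Hp4 : p mod 4 = 1) (Hpn : (p | n)%Z)
  (Ha : Z.gcd a p = 1) (Hb : Z.gcd b p = 1) (Hc : Z.gcd c p = 1)
  (Hleg : legendre a p = - legendre c p)
  (* the union defining A is disjoint *)
  (Hdisj : forall x, (0 <= x < n)%Z -> inAplus n p a b x && inAminus n p c b x = false)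
  (* A is a subgroup of (Z/nZ)^x *)
  (Hunit : forall x, (0 <= x < n)%Z -> inA n p a b c x = true -> Z.gcd x n = 1)
  (Hone : inA n p a b c (1 mod n) = true)
  (Hmul : forall x y, (0 <= x < n)%Z -> (0 <= y < n)%Z ->
          inA n p a b c x = true -> inA n p a b c y = true ->
          inA n p a b c ((x * y) mod n) = true)
  (y : Z) (Hy : (0 <= y < n)%Z) :
  ((p | y)%Z ->
     (sigma_im n (inA n p a b c) y = 0 /\
      1 - IZR p <= sigma_re n (inA n p a b c) y <= IZR p - 1)%R) /\
  (~ (p | y)%Z ->
     ((sigma_re n (inA n p a b c) y) ^ 2
        + (sigma_im n (inA n p a b c) y) ^ 2 / IZR p = 1)%R).
Proof.
rewrite (QuadraticPeriods.sigma_re_formula y Hn Hp Hp4 Hpn Ha Hc Hdisj).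
rewrite (QuadraticPeriods.sigma_im_formula y Hn Hp Hp4 Hpn Ha Hc Hdisj).
set th := phase n p b y; set ea := qperiod p (a * y); set ec := qperiod p (c * y).
split => [Hpy | Hpy].
-
  have Ea := QuadraticPeriods.qperiod_div Hp Hp4 (Z.divide_mul_r _ a _ Hpy).
  have Ec := QuadraticPeriods.qperiod_div Hp Hp4 (Z.divide_mul_r _ c _ Hpy).
  have p2 : (2 <= IZR p)%R by apply: IZR_le; exact: prime_ge_2.
  have := COS_bound th; rewrite -/ea -/ec in Ea Ec => - [c1 c2].
  rewrite (_ : ea - ec = 0)%R; last lra.
  rewrite (_ : ea + ec = IZR p - 1)%R; last lra.
  by split; [ring | split; nra].
-
  have [Hsum Hdiff] := QuadraticPeriods.qperiod_pair Hp Hp4 Ha Hleg Hpy.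
  rewrite -/ea -/ec in Hsum Hdiff.
  have p0 : IZR p <> 0%R by apply: not_0_IZR; have := prime_ge_2 _ Hp; lia.
  by rewrite Hsum !Rpow_mult_distr Hdiff -(sin2_cos2 th) /Rsqr; field.
Qed.
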